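(* Let $G$ be a $3^*$-connected cubic graph of order $2n$ with $n\geq 4$. Then $\chi'_{[n-1]}(G)=4$.
   Context: All graphs are finite, simple (no loops, no parallel edges), connected and cubic. A bridgeless cubic graph $G$ is $3^*$-connected if there exist two vertices $a,b\in V(G)$ and three internally vertex-disjoint $a$–$b$ paths $Q_1,Q_2,Q_3$ with $V(G)=V(Q_1)\cup V(Q_2)\cup V(Q_3)$. For a positive integer $k$, a $[k]$-matching of $G$ is a matching of $G$ with exactly $k$ edges. The excessive $[k]$-index $\chi'_{[k]}(G)$ is the minimum number of $[k]$-matchings of $G$ whose union is $E(G)$; if some edge of $G$ lies in no $[k]$-matching, one sets $\chi'_{[k]}(G)=\infty$. *)

From mathcomp Require Import all_boot.
Set Implicit Arguments. Unset Strict Implicit. Unset Printing Implicit Defensive.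

Section Graphs.
Variable T : finType.
Variable e : rel T.

Definition simple_graph : Prop := symmetric e /\ irreflexive e.

Definition cubic : Prop := forall x : T, #|[set y | e x y]| = 3.

Definition connected_graph : Prop := forall x y : T, connect e x y.

Definition edges : {set {set T}} :=
  [set s : {set T} | [exists x, exists y, e x y && (s == [set x; y])]].

Definition bridgeless : Prop :=
  forall u v : T, e u v ->
    connect (fun x y => e x y && ([set x; y] != [set u; v])) u v.

Definition is_path (a b : T) (p : seq T) : Prop :=
  [/\ path e a p, last a p = b & uniq (a :: p)].

Definition int_disjoint (a b : T) (p q : seq T) : Prop :=
  forall x, x \in a :: p -> x \in a :: q -> x = a \/ x = b.

Definition three_star_connected : Prop :=
  exists a b : T, exists p1 p2 p3 : seq T,
    [/\ a != b,
        [/\ is_path a b p1, is_path a b p2 & is_path a b p3],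
        [/\ p1 != p2, p1 != p3 & p2 != p3],
        [/\ int_disjoint a b p1 p2, int_disjoint a b p1 p3 &
            int_disjoint a b p2 p3] &
        forall v : T, [|| v \in a :: p1, v \in a :: p2 | v \in a :: p3]].

Definition matching (M : {set {set T}}) : Prop :=
  M \subset edges /\
  (forall s t, s \in M -> t \in M -> s != t -> [disjoint s & t]).

Definition kmatching (k : nat) (M : {set {set T}}) : Prop :=
  matching M /\ #|M| = k.

Definition covered_by_kmatchings (k m : nat) : Prop :=
  exists F : 'I_m -> {set {set T}},
    (forall i, kmatching k (F i)) /\ \bigcup_(i < m) F i = edges.

(* chi'_[k](G) = m  (a finite value m): m [k]-matchings cover E(G),
   and no fewer do. (If some edge lies in no [k]-matching, no finite
   cover exists, so this is false, consistent with chi' = infinity.) *)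
Definition excessive_index_eq (k m : nat) : Prop :=
  covered_by_kmatchings k m /\
  (forall m', m' < m -> ~ covered_by_kmatchings k m').

End Graphs.

From mathcomp Require Import all_boot zify.
Set Implicit Arguments. Unset Strict Implicit. Unset Printing Implicit Defensive.

(* Let G be cubic and 3*-connected of order 2n, n >= 4, so that |E(G)| = 3n.
   Lower bound: three [n-1]-matchings cover at most 3n - 3 < 3n edges.
   Upper bound: let a, b and the a-b paths P1, P2, P3 witness
   3*-connectivity.  Reading P1 forwards, P2 backwards and P3 forwards gives a
   walk w_0 ... w_L (L = |P1| + |P2| + |P3| edges) through every
   vertex, injective except for w_0 = w_q = a and w_p = w_L = b, where
   p = |P1| and q = |P1| + |P2|.  Hence L = 2n + 1, and the walk edges
   w_k w_(k+1) are exactly the 2n + 1 distinct edges of the theta graph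
   H = P1 u P2 u P3.  Every vertex has degree >= 2 in H, so the remaining
   3n - (2n + 1) = n - 1 edges form an [n-1]-matching.  Two walk edges k < k'
   are disjoint unless they are consecutive or meet at a or b; choosing
   explicit sets of indices (after reordering the paths so that |P1| >= 2 and
   |P3| >= 4, or in the exceptional case where all three paths have length 3)
   yields three [n-1]-matchings inside H that cover H. *)

Lemma subset_of_card (U : finType) (C A : {set U}) k :
  C \subset A -> #|C| <= k -> k <= #|A| ->
  exists B : {set U}, [/\ C \subset B, B \subset A & #|B| = k].
Proof.
move=> + Ck; move: {2}(#|A| - k) (erefl (#|A| - k)) => d.
elim: d A => [|d IH] A Ed CA kA; first by exists A; split => //; lia.
have /set0Pn [x /setDP [xA xC]] : A :\: C != set0.
  rewrite -card_gt0 cardsD (setIidPr CA); lia.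
have [|||B [CB BA cardB]] := IH (A :\ x).
- by rewrite (cardsD1 x A) xA in Ed *; lia.
- apply/subsetP => y yC; rewrite in_setD1 (subsetP CA) // andbT.
  by apply: contraNneq xC => <-.
- by rewrite (cardsD1 x A) xA in Ed kA *; lia.
by exists B; split => //; apply: subset_trans BA (subsetDl _ _).
Qed.

Lemma card_bigcup_le (U : finType) m (F : 'I_m -> {set U}) :
  #|\bigcup_(i < m) F i| <= \sum_(i < m) #|F i|.
Proof.
elim: m F => [|m IH] F; first by rewrite big_ord0 cards0.
rewrite big_ord_recr /= (big_ord_recr m) /=.
by apply: leq_trans (leq_card_setU _ _) _; rewrite leq_add2r IH.
Qed.

Lemma disjoint_from (U : finType) (A B : {set U}) :
  (forall x, x \in A -> x \in B -> False) -> [disjoint A & B].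
Proof.
move=> H; rewrite disjoint_subset; apply/subsetP => x xA; rewrite inE.
by apply/negP => xB; apply: H xA xB.
Qed.

Section SimpleGraphs.
Variables (T : finType) (e : rel T).
Hypothesis sg : simple_graph e.

Lemma in_edges s : reflect (exists x y, e x y /\ s = [set x; y]) (s \in edges e).
Proof.
rewrite inE; apply: (iffP existsP) => [[x /existsP [y /andP [xy /eqP ->]]]|[x [y [xy ->]]]].
  by exists x, y.
by exists x; apply/existsP; exists y; rewrite xy eqxx.
Qed.

Lemma edge_neq x y : e x y -> x != y.
Proof. by case: sg => _ irr xy; apply: contraTneq xy => ->; rewrite irr. Qed.

Lemma card_edge s : s \in edges e -> #|s| = 2.
Proof. by case/in_edges => x [y [xy ->]]; rewrite cards2 edge_neq. Qed.

Lemma edge_at v s : s \in edges e -> v \in s -> exists u, e v u /\ s = [set v; u].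
Proof.
case: sg => sym _ /in_edges [x [y [xy ->]]].
rewrite !inE => /orP [] /eqP ->; first by exists y.
by exists x; rewrite sym setUC.
Qed.

Lemma card_edges_at x :
  #|[set y | e x y]| = #|[set s in edges e | x \in s]|.
Proof.
have -> : [set s in edges e | x \in s] = (fun y => [set x; y]) @: [set y | e x y].
  apply/setP => s; rewrite in_set; apply/andP/imsetP.
    by case=> sE /(edge_at sE) [y [xy ->]]; exists y; rewrite ?inE.
  case=> y; rewrite inE => xy ->; split; last by rewrite !inE eqxx.
  by apply/in_edges; exists x, y.
rewrite card_in_imset // => y y'; rewrite !inE => xy xy' E.
have : y \in [set x; y'] by rewrite -E !inE eqxx orbT.
by rewrite !inE => /orP [/eqP yx|/eqP //]; move: (edge_neq xy); rewrite yx eqxx.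
Qed.

Lemma cubic_handshake : cubic e -> 2 * #|edges e| = 3 * #|T|.
Proof.
move=> cub.
have degsum : \sum_(x : T) #|[set y | e x y]| = 3 * #|T|.
  rewrite (eq_bigr (fun _ => 3)) ?sum_nat_const; last by move=> x _; rewrite cub.
  by rewrite mulnC.
have incidences : \sum_(x : T) #|[set y | e x y]| =
                  \sum_(x : T) \sum_(s in edges e) (x \in s : nat).
  apply: eq_bigr => x _; rewrite card_edges_at -sum1dep_card.
  by rewrite big_mkcondr; apply: eq_bigr => s _; case: (x \in s).
rewrite -degsum incidences exchange_big /=.
transitivity (\sum_(s in edges e) 2); first by rewrite sum_nat_const mulnC.
apply: eq_bigr => s sE; rewrite -(card_edge sE) -sum1_card big_mkcond /=.
by apply: eq_bigr => x _; case: (x \in s).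
Qed.

Lemma matching_sub (M M' : {set {set T}}) :
  M' \subset M -> matching e M -> matching e M'.
Proof.
move=> sub [ME Mdisj]; split; first exact: subset_trans sub ME.
by move=> x y xM yM; apply: Mdisj; apply: (subsetP sub).
Qed.

(* Lower bound: in a cubic graph of order 2n, three [n-1]-matchings have
   fewer than the 3n edges of the graph. *)
Lemma kmatching_cover_lower n m : cubic e -> #|T| = 2 * n -> 0 < n -> m < 4 ->
  ~ covered_by_kmatchings e n.-1 m.
Proof.
move=> cub hT hn hm [F [Fk FE]].
have hs := cubic_handshake cub.
have le_union := card_bigcup_le F; rewrite FE in le_union.
have sizes : \sum_(i < m) #|F i| = m * n.-1.
  rewrite (eq_bigr (fun _ => n.-1)); last by move=> i _; case: (Fk i).
  by rewrite sum_nat_const card_ord.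
have : m * n.-1 <= 3 * n.-1 by apply: leq_mul => //; lia.
lia.
Qed.

End SimpleGraphs.

Definition theta (T : finType) (e : rel T) (a b : T) (p1 p2 p3 : seq T) : Prop :=
  [/\ a != b, [/\ is_path e a b p1, is_path e a b p2 & is_path e a b p3],
      [/\ p1 != p2, p1 != p3 & p2 != p3],
      [/\ int_disjoint a b p1 p2, int_disjoint a b p1 p3 & int_disjoint a b p2 p3] &
      forall v, [|| v \in a :: p1, v \in a :: p2 | v \in a :: p3]].

Lemma int_disjoint_sym (T : finType) (a b : T) p q :
  int_disjoint a b p q -> int_disjoint a b q p.
Proof. by move=> D x xq xp; apply: D. Qed.

Lemma theta_swap12 (T : finType) (e : rel T) a b p1 p2 p3 :
  theta e a b p1 p2 p3 -> theta e a b p2 p1 p3.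
Proof.
case=> ab Ps [N12 N13 N23] [D12 D13 D23] cov; split => //.
- by case: Ps.
- by rewrite eq_sym.
- by split => //; apply: int_disjoint_sym.
- by move=> v; case/or3P: (cov v) => ->; rewrite ?orbT.
Qed.

Lemma theta_swap23 (T : finType) (e : rel T) a b p1 p2 p3 :
  theta e a b p1 p2 p3 -> theta e a b p1 p3 p2.
Proof.
case=> ab Ps [N12 N13 N23] [D12 D13 D23] cov; split => //.
- by case: Ps.
- by split => //; rewrite eq_sym.
- by split => //; apply: int_disjoint_sym.
- by move=> v; case/or3P: (cov v) => ->; rewrite ?orbT.
Qed.

Section Paths.
Variables (T : finType) (e : rel T) (a b : T).
Hypothesis ab : a != b.

(* The vertices of an a-b path p are nth a (a :: p) i, for i <= size p. *)
Lemma path_size p : is_path e a b p -> 0 < size p.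
Proof. by case: p => [|x p] // [_ /= H _]; move: ab; rewrite H eqxx. Qed.

Lemma nth_path_end p : is_path e a b p -> nth a (a :: p) (size p) = b.
Proof. by case=> _ H _; have := nth_last a (a :: p); rewrite /= => ->. Qed.

Lemma nth_path_inj p i j : is_path e a b p -> i <= size p -> j <= size p ->
  nth a (a :: p) i = nth a (a :: p) j -> i = j.
Proof. by case=> _ _ U hi hj E; apply/eqP; rewrite -(nth_uniq a (s := a :: p)) ?E. Qed.

Lemma nth_paths_eq p q i j : is_path e a b p -> is_path e a b q ->
  int_disjoint a b p q -> i <= size p -> j <= size q ->
  nth a (a :: p) i = nth a (a :: q) j ->
  (i = 0 /\ j = 0) \/ (i = size p /\ j = size q).
Proof.
move=> Pp Pq D hi hj E.
have mp : nth a (a :: p) i \in a :: p by apply: mem_nth.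
have mq : nth a (a :: p) i \in a :: q by rewrite E; apply: mem_nth.
case: (D _ mp mq) => H; [left|right]; split.
- by apply: (nth_path_inj Pp hi (leq0n _)); rewrite H.
- by apply: (nth_path_inj Pq hj (leq0n _)); rewrite -E H.
- by apply: (nth_path_inj Pp hi (leqnn _)); rewrite H nth_path_end.
- by apply: (nth_path_inj Pq hj (leqnn _)); rewrite -E H nth_path_end.
Qed.

Lemma short_paths_eq p q : is_path e a b p -> is_path e a b q ->
  size p = 1 -> size q = 1 -> p = q.
Proof.
have single r : is_path e a b r -> size r = 1 -> r = [:: b].
  by case: r => [|x [|]] //= [_ /= -> _].
by move=> Pp Pq /(single _ Pp) -> /(single _ Pq) ->.
Qed.

End Paths.

Section ThetaWalk.
Variables (T : finType) (e : rel T) (a b : T) (p1 p2 p3 : seq T).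
Hypothesis sg : simple_graph e.
Hypothesis th : theta e a b p1 p2 p3.

Let ab : a != b. Proof. by case: th. Qed.
Let P1 : is_path e a b p1. Proof. by case: th => _ []. Qed.
Let P2 : is_path e a b p2. Proof. by case: th => _ []. Qed.
Let P3 : is_path e a b p3. Proof. by case: th => _ []. Qed.

Local Notation len1 := (size p1).
Local Notation len12 := (size p1 + size p2).
Local Notation len := (size p1 + size p2 + size p3).

Lemma theta_lengths_pos : [/\ 0 < size p1, 0 < size p2 & 0 < size p3].
Proof.
by split; [exact: (path_size ab P1)|exact: (path_size ab P2)|exact: (path_size ab P3)].
Qed.

Lemma theta_one_short :
  [/\ ~ (size p1 = 1 /\ size p2 = 1), ~ (size p1 = 1 /\ size p3 = 1)
    & ~ (size p2 = 1 /\ size p3 = 1)].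
Proof.
case: th => _ _ [N12 N13 N23] _ _; split; case=> s s'.
- by move/eqP: N12; apply; exact: (short_paths_eq P1 P2 s s').
- by move/eqP: N13; apply; exact: (short_paths_eq P1 P3 s s').
- by move/eqP: N23; apply; exact: (short_paths_eq P2 P3 s s').
Qed.

(* Arithmetic facts on the lengths handed to lia; the second form is needed
   only where two single-edge paths would make distinct positions coincide. *)
Ltac lengths := case: theta_lengths_pos => ? ? ?.
Ltac all_lengths := lengths; case: theta_one_short => ? ? ?.

(* The walk a --P1--> b --P2 reversed--> a --P3--> b, indexed by 0..len. *)
Definition walk i := if i <= len1 then nth a (a :: p1) i
  else if i <= len12 then nth a (a :: p2) (len12 - i) else nth a (a :: p3) (i - len12).

Lemma walk1 i : i <= len1 -> walk i = nth a (a :: p1) i.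
Proof. by rewrite /walk => ->. Qed.

Lemma walk2 i : len1 <= i -> i <= len12 -> walk i = nth a (a :: p2) (len12 - i).
Proof.
move=> h1 h2; rewrite /walk; case: (leqP i len1) => h3; last by rewrite h2.
have -> : i = len1 by lia.
by rewrite addKn (nth_path_end P1) (nth_path_end P2).
Qed.

Lemma walk3 i : len12 <= i -> walk i = nth a (a :: p3) (i - len12).
Proof.
lengths; move=> h; rewrite /walk; case: (leqP i len1) => h1; first by lia.
case: (leqP i len12) => h2 //.
have -> : i = len12 by lia.
by rewrite subnn.
Qed.

Lemma walk_eq i j : i <= len -> j <= len -> walk i = walk j ->
  i = j \/ (i = 0 /\ j = len12) \/ (i = len12 /\ j = 0) \/ (i = len1 /\ j = len)
  \/ (i = len /\ j = len1).
Proof.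
lengths; case: th => _ _ _ [D12 D13 D23] _.
have D21 := int_disjoint_sym D12; have D31 := int_disjoint_sym D13.
have D32 := int_disjoint_sym D23.
move=> hi hj E.
case: (leqP i len1) => i1; [rewrite (walk1 i1) in E|
  case: (leqP i len12) => i2;
  [rewrite (walk2 (ltnW i1) i2) in E| rewrite (walk3 (ltnW i2)) in E]];
(case: (leqP j len1) => j1; [rewrite (walk1 j1) in E|
  case: (leqP j len12) => j2;
  [rewrite (walk2 (ltnW j1) j2) in E| rewrite (walk3 (ltnW j2)) in E]]).
- have := nth_path_inj P1 i1 j1 E; lia.
- have := nth_paths_eq (j := len12 - j) P1 P2 D12 i1 ltac:(lia) E; lia.
- have := nth_paths_eq (j := j - len12) P1 P3 D13 i1 ltac:(lia) E; lia.
- have := nth_paths_eq (i := len12 - i) P2 P1 D21 ltac:(lia) j1 E; lia.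
- have := nth_path_inj (i := len12 - i) (j := len12 - j) P2 ltac:(lia) ltac:(lia) E; lia.
- have := nth_paths_eq (i := len12 - i) (j := j - len12) P2 P3 D23
    ltac:(lia) ltac:(lia) E; lia.
- have := nth_paths_eq (i := i - len12) P3 P1 D31 ltac:(lia) j1 E; lia.
- have := nth_paths_eq (i := i - len12) (j := len12 - j) P3 P2 D32
    ltac:(lia) ltac:(lia) E; lia.
- have := nth_path_inj (i := i - len12) (j := j - len12) P3 ltac:(lia) ltac:(lia) E; lia.
Qed.

Ltac coincide E := match type of E with walk ?x = walk ?y =>
  have := @walk_eq x y ltac:(lia) ltac:(lia) E end.

Lemma walk_adj k : k < len -> e (walk k) (walk k.+1).
Proof.
lengths; case: sg => sym _ hk.
have step p i : is_path e a b p -> i < size p ->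
    e (nth a (a :: p) i) (nth a (a :: p) i.+1).
  by case=> /(pathP a) H _ _; apply: H.
case: (ltnP k len1) => k1; first by rewrite (walk1 (ltnW k1)) (walk1 k1); apply: step.
case: (ltnP k len12) => k2.
  rewrite (walk2 k1 (ltnW k2)) (walk2 (leqW k1) k2) sym.
  have -> : len12 - k = (len12 - k.+1).+1 by lia.
  by apply: step => //; lia.
rewrite (walk3 k2) (walk3 (leqW k2)).
have -> : k.+1 - len12 = (k - len12).+1 by lia.
by apply: step => //; lia.
Qed.

Lemma walk_onto v : exists i, [/\ i < len, i != len12 & walk i = v].
Proof.
lengths.
have shift i : i <= len -> walk i = v -> exists i, [/\ i < len, i != len12 & walk i = v].
  move=> hi E; case: (eqVneq i len12) => [iq|iq].
    exists 0; split; [lia|lia|].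
    by rewrite -E iq (walk1 (leq0n _)) (walk2 (leq_addr _ _) (leqnn _)) subnn.
  case: (eqVneq i len) => [iL|iL]; last by exists i; split => //; lia.
  exists len1; split => //; [lia|lia|].
  rewrite -E iL (walk1 (leqnn _)) (walk3 (leq_addr _ _)) addKn.
  by rewrite (nth_path_end P1) (nth_path_end P3).
have index_le p : v \in a :: p -> index v (a :: p) <= size p.
  by move=> vp; have := index_mem v (a :: p); rewrite vp /=; lia.
case: th => _ _ _ _ /(_ v) /or3P [] vp; have := index_le _ vp => hI.
- by apply: (shift (index v (a :: p1))); rewrite ?walk1 ?nth_index //; lia.
- apply: (shift (len12 - index v (a :: p2))); first by lia.
  by rewrite walk2 ?subKn ?nth_index //; lia.
- apply: (shift (len12 + index v (a :: p3))); first by lia.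
  by rewrite walk3 ?addKn ?nth_index //; lia.
Qed.

Lemma card_theta : #|T| = len.-1.
Proof.
lengths; have qL : len12 < len by lia.
pose Pos := [set i : 'I_len | val i != len12].
have HT : [set: T] = (fun i : 'I_len => walk i) @: Pos.
  apply/setP => v; rewrite inE; symmetry.
  have [i [hi hq <-]] := walk_onto v.
  by apply/imsetP; exists (Ordinal hi); rewrite // inE.
rewrite -cardsT HT card_in_imset.
  have -> : Pos = [set~ Ordinal qL] by apply/setP => i; rewrite !inE -val_eqE.
  by rewrite cardsC1 card_ord.
move=> i j; rewrite !inE => hi hj E; apply: ord_inj.
have := walk_eq (ltnW (ltn_ord i)) (ltnW (ltn_ord j)) E.
by have := ltn_ord i; have := ltn_ord j; move: hi hj => /= hi hj; lia.
Qed.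

Definition walk_edge k := [set walk k; walk k.+1].

(* Walk edges k < k' are disjoint as soon as they are not consecutive and do not
   meet at a (edge 0 against edges len12 - 1, len12) or at b (edge len - 1
   against edges len1 - 1, len1). *)
Definition compatible k k' :=
  [&& k.+1 != k', (k != 0) || ((k' != len12.-1) && (k' != len12)) &
      (k' != len.-1) || ((k != len1.-1) && (k != len1))].

Lemma walk_edge_in k : k < len -> walk_edge k \in edges e.
Proof. by move=> hk; apply/in_edges; exists (walk k), (walk k.+1); rewrite walk_adj. Qed.

Lemma walk_edge_disjoint k k' : k < k' -> k' < len -> compatible k k' ->
  [disjoint walk_edge k & walk_edge k'].
Proof.
all_lengths; move=> h1 h2 C; apply: disjoint_from => x; rewrite !inE.
by move: C; rewrite /compatible => C /orP [] /eqP -> /orP [] /eqP E; coincide E; lia.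
Qed.

Lemma walk_edge_inj k k' : k < len -> k' < len -> walk_edge k = walk_edge k' -> k = k'.
Proof.
all_lengths; move=> hk hk' E.
have : walk k \in walk_edge k' by rewrite -E !inE eqxx.
have : walk k.+1 \in walk_edge k' by rewrite -E !inE eqxx orbT.
by rewrite !inE => /orP [] /eqP E1 /orP [] /eqP E2; coincide E1; coincide E2; lia.
Qed.

Definition theta_edges := [set walk_edge k | k : 'I_len].

Lemma card_theta_edges : #|theta_edges| = len.
Proof. by rewrite card_imset ?card_ord // => k k' /walk_edge_inj E; apply/ord_inj/E. Qed.

Lemma theta_edges_sub : theta_edges \subset edges e.
Proof. by apply/subsetP => s /imsetP [k _ ->]; apply: walk_edge_in. Qed.

Lemma walk_inner x : exists j, [/\ 0 < j, j < len & walk j = x].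
Proof.
lengths; have [i [hi hq <-]] := walk_onto x.
case: (posnP i) => [->|i0]; last by exists i.
exists len12; split; [lia|lia|].
by rewrite (walk1 (leq0n _)) (walk2 (leq_addr _ _) (leqnn _)) subnn.
Qed.

Lemma walk_neighbours_neq j : 0 < j -> j < len -> walk j.-1 != walk j.+1.
Proof. by all_lengths; move=> j0 jL; apply/eqP => E; coincide E; lia. Qed.

(* The edges outside the theta graph form a matching: each vertex already
   meets two theta edges, so in a cubic graph at most one other edge. *)
Lemma outer_matching : cubic e -> matching e (edges e :\: theta_edges).
Proof.
move=> cub; split; first exact: subsetDl.
case: sg => sym _ s t; rewrite !in_setD => /andP [sH sE] /andP [tH tE] st.
apply: disjoint_from => x xs xt.
have [j [j0 jL E]] := walk_inner x.
have [u1 [xu1 Es]] := edge_at sg sE xs.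
have [u2 [xu2 Et]] := edge_at sg tE xt.
have before : walk_edge j.-1 = [set x; walk j.-1] by rewrite /walk_edge setUC prednK // E.
have after : walk_edge j = [set x; walk j.+1] by rewrite /walk_edge E.
have theta_in k : k < len -> walk_edge k \in theta_edges.
  by move=> hk; apply/imsetP; exists (Ordinal hk).
have outer u s' : s' \notin theta_edges -> s' = [set x; u] ->
    (u != walk j.-1) && (u != walk j.+1).
  move=> sn su; rewrite su in sn; apply/andP; split; apply: contraNneq sn => ->.
  - by rewrite -before theta_in // (leq_ltn_trans (leq_pred j) jL).
  - by rewrite -after theta_in.
have /andP [n1a n1b] := outer _ _ sH Es.
have /andP [n2a n2b] := outer _ _ tH Et.
have u12 : u1 != u2 by apply: contra_neq st => u12; rewrite Es Et u12.
have prev_next := walk_neighbours_neq j0 jL.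
have nb4 : uniq [:: walk j.-1; walk j.+1; u1; u2].
  rewrite /= !inE !negb_or u12 andbT prev_next.
  by rewrite eq_sym n1a eq_sym n2a eq_sym n1b eq_sym n2b.
have : #|[:: walk j.-1; walk j.+1; u1; u2]| <= #|[set y | e x y]|.
  apply/subset_leq_card/subsetP => y; rewrite !inE.
  case/or4P => /eqP -> //; rewrite -E; last exact: walk_adj.
  by rewrite sym; have := walk_adj (leq_ltn_trans (leq_pred j) jL); rewrite prednK.
by rewrite cub (card_uniqP nb4).
Qed.

Lemma index_kmatching (D : finType) (A : {set D}) (h : D -> nat) :
  (forall x, x \in A -> h x < len) -> {in A &, injective h} ->
  (forall x y, x \in A -> y \in A -> h x < h y -> compatible (h x) (h y)) ->
  kmatching e #|A| [set walk_edge (h x) | x in A].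
Proof.
move=> hL hI hC; split; last first.
  rewrite card_in_imset // => x y xA yA E.
  by apply: hI => //; apply: walk_edge_inj (hL x xA) (hL y yA) E.
split; first by apply/subsetP => s /imsetP [x xA ->]; apply: walk_edge_in (hL x xA).
move=> s t /imsetP [x xA ->] /imsetP [y yA ->] st.
case: (ltngtP (h x) (h y)) => H.
- exact: walk_edge_disjoint H (hL y yA) (hC x y xA yA H).
- by rewrite disjoint_sym; apply: walk_edge_disjoint H (hL x xA) (hC y x yA xA H).
- by rewrite H eqxx in st.
Qed.

Variable n : nat.
Hypothesis hT : #|T| = 2 * n.
Hypothesis cub : cubic e.

Lemma len_value : len = 2 * n + 1.
Proof. by have := card_theta; lengths; lia. Qed.

(* The n - 1 edges outside the theta graph form one [n-1]-matching, so it
   suffices to cover the theta graph by three [n-1]-matchings. *)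
Lemma cover_of_theta_cover (B1 B2 B3 : {set {set T}}) :
  kmatching e n.-1 B1 -> kmatching e n.-1 B2 -> kmatching e n.-1 B3 ->
  theta_edges \subset B1 :|: B2 :|: B3 -> covered_by_kmatchings e n.-1 4.
Proof.
move=> k1 k2 k3 HB; set M0 := edges e :\: theta_edges.
have k0 : kmatching e n.-1 M0.
  split; first exact: outer_matching.
  have := cubic_handshake sg cub.
  by rewrite cardsD (setIidPr theta_edges_sub) card_theta_edges len_value hT; lia.
have within_edges (B : {set {set T}}) : kmatching e n.-1 B -> B \subset edges e.
  by case=> [[]].
exists (fun i : 'I_4 => nth set0 [:: M0; B1; B2; B3] i); split.
  by case=> [[|[|[|[|m]]]] Hi] //=.
rewrite !big_ord_recr big_ord0 /= set0U; apply/eqP; rewrite eqEsubset.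
rewrite !subUset subsetDl (within_edges _ k1) (within_edges _ k2) (within_edges _ k3) /=.
apply/subsetP => s sE; case: (boolP (s \in theta_edges)) => sH.
  by have := subsetP HB s sH; rewrite !in_setU -!orbA => ->; rewrite !orbT.
by rewrite !in_setU in_setD sH sE.
Qed.

Hypothesis hn : 4 <= n.

Section GeneralCase.
Hypotheses (long1 : 2 <= size p1) (long3 : 4 <= size p3).

(* The three matchings use the odd
   indices below 2n - 2; the even indices 2 .. 2n - 4 together with 2n - 1;
   and n - 1 even indices away from the junctions, including 0, 2n - 2, 2n. *)
Definition odd_index (i : 'I_n.-1) := 2 * i + 1.
Definition even_index (i : 'I_n.-1) := if i < n - 2 then 2 * i + 2 else 2 * n - 1.
Definition double_index (i : 'I_n.+1) := 2 * i.
Definition off_junction :=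
  [set i : 'I_n.+1 | [&& 2 * i != len1.-1, 2 * i != len1, 2 * i != len12.-1 & 2 * i != len12]].

Definition odd_edges := [set walk_edge (odd_index i) | i in [set: 'I_n.-1]].
Definition even_edges := [set walk_edge (even_index i) | i in [set: 'I_n.-1]].
Definition junction_edges := [set walk_edge 0; walk_edge (2 * n - 2); walk_edge (2 * n)].

Lemma odd_kmatching : kmatching e n.-1 odd_edges.
Proof.
have Elen := len_value.
rewrite -[n.-1]card_ord -cardsT; apply: index_kmatching => [x _|x y _ _|x y _ _].
- by have := ltn_ord x; rewrite /odd_index; lia.
- by rewrite /odd_index => E; apply: ord_inj; lia.
- by rewrite /odd_index /compatible; lia.
Qed.

Lemma even_kmatching : kmatching e n.-1 even_edges.
Proof.
have Elen := len_value.
rewrite -[n.-1]card_ord -cardsT; apply: index_kmatching => [x _|x y _ _|x y _ _];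
  have := ltn_ord x; rewrite /even_index.
- by case: ifP; lia.
- have := ltn_ord y => ? ? E; apply: ord_inj; move: E.
  by case: (ltnP x (n - 2)); case: (ltnP y (n - 2)); lia.
- have := ltn_ord y; rewrite /compatible.
  by case: (ltnP x (n - 2)); case: (ltnP y (n - 2)); lia.
Qed.

(* Among the n + 1 even indices, at most one lies in {len1 - 1, len1} and
   at most one in {len12 - 1, len12}. *)
Lemma card_off_junction : n.-1 <= #|off_junction|.
Proof.
have Elen := len_value.
have hp := odd_double_half len1; have hq := odd_double_half len12.
rewrite -muln2 in hp hq.
have sub : ~: off_junction \subset [set inord len1./2; inord len12./2].
  apply/subsetP => x; rewrite in_setC !inE -!val_eqE /= !inordK; lia.
have := subset_leq_card sub; have := cardsC off_junction; rewrite card_ord.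
have : #|[set (inord len1./2 : 'I_n.+1); inord len12./2]| <= 2.
  by rewrite cards2; case: (_ != _).
lia.
Qed.

(* The even indices off the junctions, trimmed to n - 1 of them while keeping
   0, 2n - 2 and 2n, which are off the junctions since |P1| >= 2, |P3| >= 4. *)
Lemma junction_kmatching :
  exists2 B, kmatching e n.-1 B & junction_edges \subset B.
Proof.
have Elen := len_value.
set A := [set walk_edge (double_index i) | i in off_junction].
have [|||mA cA] := @index_kmatching _ off_junction double_index.
- by move=> x _; have := ltn_ord x; rewrite /double_index; lia.
- by move=> x y _ _; rewrite /double_index => E; apply: ord_inj; lia.
- by move=> x y; rewrite !inE /double_index /compatible; lia.
have JA : junction_edges \subset A.
  apply/subsetP => s; rewrite !inE -!orbA => /or3P [] /eqP ->; apply/imsetP.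
  - by exists ord0 => //; rewrite inE /double_index /=; lia.
  - have hi : n.-1 < n.+1 by lia.
    exists (Ordinal hi); first by rewrite inE /=; lia.
    by rewrite /double_index /=; congr walk_edge; lia.
  - by exists ord_max => //; rewrite inE /=; lia.
have cJ : #|junction_edges| <= n.-1.
  rewrite /junction_edges -setUA; apply: leq_trans (leq_card_setU _ _) _.
  by rewrite cards1 cards2; case: (_ != _); lia.
have [B [JB BA cB]] := subset_of_card JA cJ (leq_trans card_off_junction (eq_leq (esym cA))).
by exists B => //; split => //; apply: matching_sub BA mA.
Qed.

Lemma general_cover : covered_by_kmatchings e n.-1 4.
Proof.
have Elen := len_value.
have [B3 k3 JB] := junction_kmatching.
apply: (cover_of_theta_cover odd_kmatching even_kmatching k3).
apply/subsetP => s /imsetP [k _ ->].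
have : nat_of_ord k < 2 * n + 1 by rewrite -Elen.
move: (nat_of_ord k) => m hk; rewrite !in_setU -!orbA.
have hm := odd_double_half m; rewrite -muln2 in hm.
case: (boolP [|| m == 0, m == 2 * n - 2 | m == 2 * n]) => hj.
  apply/or3P/Or33/(subsetP JB); rewrite !inE -!orbA.
  by case/or3P: hj => /eqP ->; rewrite eqxx ?orbT.
move: hm; case om : (odd m) => /= hm.
- case: (leqP m (2 * n - 3)) => hm3.
  + have hi : m./2 < n.-1 by lia.
    apply/or3P/Or31/imsetP; exists (Ordinal hi) => //.
    by rewrite /odd_index /=; congr walk_edge; lia.
  + have hi : n - 2 < n.-1 by lia.
    apply/or3P/Or32/imsetP; exists (Ordinal hi) => //.
    by rewrite /even_index /= ltnn; congr walk_edge; lia.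
- have hi : m./2 - 1 < n.-1 by move: hj; lia.
  apply/or3P/Or32/imsetP; exists (Ordinal hi) => //.
  rewrite /even_index /=; case: ltnP => ? ; last by move: hj; lia.
  by congr walk_edge; move: hj; lia.
Qed.

End GeneralCase.

Section ExceptionalCase.
Hypotheses (three1 : size p1 = 3) (three2 : size p2 = 3) (three3 : size p3 = 3).

Lemma triple_kmatching (l : seq nat) : size l = 3 -> uniq l ->
  (forall i : 'I_3, nth 0 l i < len) ->
  (forall i j : 'I_3, nth 0 l i < nth 0 l j -> compatible (nth 0 l i) (nth 0 l j)) ->
  kmatching e 3 [set walk_edge (nth 0 l (i : 'I_3)) | i in [set: 'I_3]].
Proof.
move=> sl ul hL hC.
have := @index_kmatching _ [set: 'I_3] (fun i => nth 0 l i); rewrite cardsT card_ord.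
apply=> [i _|i j _ _ E|i j _ _]; [exact: hL| |exact: hC].
by apply/ord_inj/eqP; rewrite -(nth_uniq 0 _ _ ul) ?sl ?E.
Qed.

(* Here n = 4 and the nine walk edges split as {0,3,7}, {1,5,8}, {2,4,6}. *)
Lemma exceptional_cover : covered_by_kmatchings e n.-1 4.
Proof.
have n4 : n = 4 by have := len_value; lia.
have table l : l \in [:: [:: 0; 3; 7]; [:: 1; 5; 8]; [:: 2; 4; 6]] ->
    kmatching e n.-1 [set walk_edge (nth 0 l (i : 'I_3)) | i in [set: 'I_3]].
  rewrite n4 !inE => /or3P [] /eqP ->; apply: triple_kmatching => //; solve
    [ case=> [[|[|[|//]]] ?] /=; lia
    | case=> [[|[|[|//]]] ?] [[|[|[|//]]] ?];
      by rewrite /compatible /= three1 three2 three3 ].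
apply: (cover_of_theta_cover (table [:: 0; 3; 7] isT) (table [:: 1; 5; 8] isT)
  (table [:: 2; 4; 6] isT)).
apply/subsetP => s /imsetP [k _ ->].
have hk : nat_of_ord k < 9 by have := ltn_ord k; lia.
have listed l m : m \in l -> size l = 3 ->
    walk_edge m \in [set walk_edge (nth 0 l (i : 'I_3)) | i in [set: 'I_3]].
  move=> ml sl; have hi : index m l < 3 by rewrite -sl index_mem.
  by apply/imsetP; exists (Ordinal hi) => //; rewrite /= nth_index.
rewrite !in_setU; move: (nat_of_ord k) hk => m hm.
have : [|| m \in [:: 0; 3; 7], m \in [:: 1; 5; 8] | m \in [:: 2; 4; 6]].
  have all9 : all (fun m => [|| m \in [:: 0; 3; 7], m \in [:: 1; 5; 8] | m \in [:: 2; 4; 6]])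
    (iota 0 9) by [].
  by apply: (allP all9); rewrite mem_iota.
by case/or3P => /listed -> //; rewrite orbT.
Qed.

End ExceptionalCase.

End ThetaWalk.

Lemma theta_normalize (T : finType) (e : rel T) n a b p1 p2 p3 :
  #|T| = 2 * n -> 4 <= n -> theta e a b p1 p2 p3 ->
  exists q1 q2 q3, theta e a b q1 q2 q3 /\
    ((2 <= size q1 /\ 4 <= size q3) \/ [/\ size q1 = 3, size q2 = 3 & size q3 = 3]).
Proof.
move=> hT hn th; have Elen := card_theta th; rewrite hT in Elen.
have [s1 s2 s3] := theta_lengths_pos th; have [n12 n13 n23] := theta_one_short th.
have th213 := theta_swap12 th; have th132 := theta_swap23 th.
have th231 := theta_swap23 th213; have th312 := theta_swap12 th132.
have th321 := theta_swap12 th231.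
case: (leqP 4 (size p3)) => [long3|short3].
  case: (leqP 2 (size p1)) => [long1|short1]; last exists p2, p1, p3.
    by exists p1, p2, p3; split => //; left.
  by split => //; left; lia.
case: (leqP 4 (size p2)) => [long2|short2].
  case: (leqP 2 (size p1)) => [long1|short1]; [exists p1, p3, p2|exists p3, p1, p2].
    by split => //; left.
  by split => //; left; lia.
case: (leqP 4 (size p1)) => [long1|short1].
  case: (leqP 2 (size p2)) => [mid2|single2]; [exists p2, p3, p1|exists p3, p2, p1].
    by split => //; left.
  by split => //; left; lia.
by exists p1, p2, p3; split => //; right; split; lia.
Qed.

Lemma three_star_cover (T : finType) (e : rel T) n :
  simple_graph e -> cubic e -> #|T| = 2 * n -> 4 <= n ->
  three_star_connected e -> covered_by_kmatchings e n.-1 4.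
Proof.
move=> sg cub hT hn [a [b [p1 [p2 [p3 th]]]]].
have [q1 [q2 [q3 [thq [[long1 long3]|[three1 three2 three3]]]]]] :=
  theta_normalize hT hn th.
- exact: (general_cover sg thq hT cub hn long1 long3).
- exact: (exceptional_cover sg thq hT cub hn three1 three2 three3).
Qed.

Theorem proposition8 (T : finType) (e : rel T) (n : nat) :
  simple_graph e -> connected_graph e -> cubic e -> bridgeless e ->
  three_star_connected e ->
  #|T| = 2 * n -> 4 <= n ->
  excessive_index_eq e n.-1 4.
Proof.
move=> sg _ cub _ tsc hT hn; split; first exact: three_star_cover.
by move=> m hm; apply: kmatching_cover_lower => //; lia.
Qed.
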